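(* There is a universal constant $K_1\le 20480$ such that for any two independent real random variables $X,Y$ with finite second moments, with $E=\mathbb{E}[X+Y]$, $V=\operatorname{Var}(X+Y)$ and $V+E^2>0$, \[ \operatorname{Var}|X+Y| \;\ge\; \frac{V\cdot\min\{\operatorname{Var}X,\operatorname{Var}Y\}}{K_1\,(V+E^2)}. \]
   Context: $\operatorname{Var} Z=\mathbb{E}[Z^2]-(\mathbb{E}Z)^2$. *)

From HB Require Import structures.
From mathcomp Require Import all_boot all_order all_algebra.
From mathcomp Require Import all_classical all_reals all_analysis.
Set Implicit Arguments. Unset Strict Implicit. Unset Printing Implicit Defensive.
Import Order.TTheory GRing.Theory Num.Theory.
Local Open Scope classical_set_scope.
Local Open Scope ring_scope.

Definition independent_RV d (T : measurableType d) (R : realType)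
    (P : probability T R) (X Y : T -> R) : Prop :=
  forall A B : set R, measurable A -> measurable B ->
    P (X @^-1` A `&` Y @^-1` B) = (P (X @^-1` A) * P (Y @^-1` B))%E.

From HB Require Import structures.
From mathcomp Require Import all_boot all_order all_algebra.
From mathcomp Require Import all_classical all_reals all_analysis.
From mathcomp Require Import measurable_realfun ring lra.
Import Order.TTheory GRing.Theory Num.Theory.
Local Open Scope classical_set_scope.
Local Open Scope ring_scope.

(* Let X' and Y' be copies of X and Y such that X, X', Y, Y' are independent,
   and put a := E|X + Y|.  The sums s = X + Y, s' = X' + Y', t = X + Y' and
   t' = X' + Y satisfy s + s' = t + t' and t t' - s s' = (X - X') (Y - Y'), and an
   elementary inequality bounds ((X - X') (Y - Y'))^2 by 18 times the sum of the
   four products F u * G v with (u, v) among (s, s'), (s', s), (t, t'), (t', t),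
   where F z = (|z| - a)^2 and G z = z^2 + a^2.  By independence each product has
   expectation Var|X + Y| * (E (X + Y)^2 + a^2), while the left-hand side has
   expectation at least Var X * Var Y.  As a^2 <= E (X + Y)^2 = V + E^2 and
   V * min (Var X) (Var Y) <= 4 Var X Var Y, the bound holds with K1 = 576. *)

Section pointwise.
Context {R : realFieldType}.
Implicit Types a s t x y : R.

Definition pair_dev a s t := `|s - a| * (t + a) + `|t - a| * (s + a).

Lemma pair_dev_lower_bounds s t a : 0 <= s -> 0 <= t -> 0 <= a ->
  [/\ 2 * (s * t - a ^+ 2) <= pair_dev a s t,
      2 * (a ^+ 2 - s * t) <= pair_dev a s t,
      2 * a * (s - t) <= pair_dev a s t,
      2 * a * (t - s) <= pair_dev a s t &
      a * (2 * a - s - t) <= pair_dev a s t].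
Proof.
move=> s0 t0 a0; rewrite /pair_dev.
have [sa|sa] := lerP 0 (s - a); have [ta|ta] := lerP 0 (t - a);
  rewrite ?(ger0_norm sa) ?(ltr0_norm sa) ?(ger0_norm ta) ?(ltr0_norm ta);
  split; nra.
Qed.

Lemma norm_mulB_le_pair_dev (s1 s2 s3 s4 a : R) : s1 + s2 = s3 + s4 -> 0 <= a ->
  `|s3 * s4 - s1 * s2| <=
    3 / 2 * (pair_dev a `|s1| `|s2| + pair_dev a `|s3| `|s4|).
Proof.
move=> s1234 a0.
have [A1 A2 A3 A4 A5] := pair_dev_lower_bounds _ _ _ (normr_ge0 s1) (normr_ge0 s2) a0.
have [B1 B2 B3 B4 B5] := pair_dev_lower_bounds _ _ _ (normr_ge0 s3) (normr_ge0 s4) a0.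
move: A1 A2 A3 A4 A5 B1 B2 B3 B4 B5.
move: (pair_dev a `|s1| `|s2|) (pair_dev a `|s3| `|s4|) => P12 P34.
have -> : s4 = s1 + s2 - s3 by rewrite s1234; ring.
have [h1|h1] := lerP 0 s1; have [h2|h2] := lerP 0 s2;
have [h3|h3] := lerP 0 s3; have [h4|h4] := lerP 0 (s1 + s2 - s3);
rewrite ?(ger0_norm h1) ?(ltr0_norm h1) ?(ger0_norm h2) ?(ltr0_norm h2)
  ?(ger0_norm h3) ?(ltr0_norm h3) ?(ger0_norm h4) ?(ltr0_norm h4);
move=> *; rewrite ler_norml; apply/andP; split; nra.
Qed.

Definition normdev2 a s := (`|s| - a) ^+ 2.
Definition sqr_plus a s := s ^+ 2 + a ^+ 2.

Lemma normdev2_ge0 a s : 0 <= normdev2 a s.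
Proof. exact: sqr_ge0. Qed.

Lemma sqr_plus_ge0 a s : 0 <= sqr_plus a s.
Proof. by rewrite addr_ge0 ?sqr_ge0. Qed.

Lemma sqr_normdev_mul_le a s t : 0 <= a ->
  (`| `|s| - a| * (`|t| + a)) ^+ 2 <= 2 * (normdev2 a s * sqr_plus a t).
Proof.
move=> a0; rewrite /normdev2 /sqr_plus exprMn real_normK ?num_real//.
rewrite -(real_normK (num_real t)).
have := mulr_ge0 (sqr_ge0 (`|s| - a)) (sqr_ge0 (`|t| - a)).
have := normr_ge0 t; move: `|t| => u; nra.
Qed.

Lemma sqr_add4_le (q1 q2 q3 q4 : R) :
  (q1 + q2 + q3 + q4) ^+ 2 <= 4 * (q1 ^+ 2 + q2 ^+ 2 + q3 ^+ 2 + q4 ^+ 2).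
Proof.
have := sqr_ge0 (q1 - q2); have := sqr_ge0 (q1 - q3); have := sqr_ge0 (q1 - q4).
have := sqr_ge0 (q2 - q3); have := sqr_ge0 (q2 - q4); have := sqr_ge0 (q3 - q4).
nra.
Qed.

Lemma sqr_mulBB_le x x' y y' a : 0 <= a ->
  ((x - x') * (y - y')) ^+ 2 <= 18 *
    (normdev2 a (x + y) * sqr_plus a (x' + y') +
     normdev2 a (x + y') * sqr_plus a (x' + y) +
     (normdev2 a (x' + y) * sqr_plus a (x + y') +
      normdev2 a (x' + y') * sqr_plus a (x + y))).
Proof.
move=> a0.
have := norm_mulB_le_pair_dev (x + y) (x' + y') (x + y') (x' + y) a _ a0.
have -> : (x + y') * (x' + y) - (x + y) * (x' + y') = (x - x') * (y - y') by ring.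
move=> /(_ ltac:(ring)); rewrite /pair_dev -(real_normK (num_real (_ * _))).
have := sqr_normdev_mul_le a (x + y) (x' + y') a0.
have := sqr_normdev_mul_le a (x' + y') (x + y) a0.
have := sqr_normdev_mul_le a (x + y') (x' + y) a0.
have := sqr_normdev_mul_le a (x' + y) (x + y') a0.
set q1 := `| `|x + y| - a| * _; set q2 := `| `|x' + y'| - a| * _.
set q3 := `| `|x + y'| - a| * _; set q4 := `| `|x' + y| - a| * _.
have := sqr_add4_le q1 q2 q3 q4; clearbody q1 q2 q3 q4.
have := normr_ge0 ((x - x') * (y - y')); move: `|(x - x') * (y - y')| => u.
nra.
Qed.

Lemma mul_min_le v x y : 0 <= x -> 0 <= y -> v <= 2 * (x + y) ->
  v * Num.min x y <= 4 * (x * y).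
Proof.
move=> x0 y0 vxy; rewrite /Num.min; case: ifPn => [/ltW|]; last rewrite -leNgt.
- move=> yx; rewrite -subr_ge0 in yx; have := mulr_ge0 x0 yx.
  by have := ler_wpM2r x0 vxy; nra.
- move=> xy; rewrite -subr_ge0 in xy; have := mulr_ge0 y0 xy.
  by have := ler_wpM2r y0 vxy; nra.
Qed.

End pointwise.

Definition pick {T : Type} (b : bool) (p : T * T) : T := if b then p.1 else p.2.

Lemma measurable_pick d (T : measurableType d) b : measurable_fun setT (@pick T b).
Proof. by case: b; [exact: measurable_fst | exact: measurable_snd]. Qed.

Section product_integrals.
Local Open Scope ereal_scope.
Context {R : realType}.

Lemma integral_prod_mul {d1 d2} {T1 : measurableType d1} {T2 : measurableType d2}
    (m1 : {sigma_finite_measure set T1 -> \bar R})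
    (m2 : {sigma_finite_measure set T2 -> \bar R}) (f : T1 -> \bar R) (g : T2 -> \bar R) :
  measurable_fun setT f -> measurable_fun setT g ->
  (forall x, 0 <= f x) -> (forall y, 0 <= g y) ->
  \int[m1 \x m2]_z (f z.1 * g z.2) = \int[m1]_x f x * \int[m2]_y g y.
Proof.
move=> mf mg f0 g0.
have mfg : measurable_fun setT (fun z : T1 * T2 => f z.1 * g z.2).
  by apply: emeasurable_funM; apply: measurableT_comp.
rewrite (fubini_tonelli1 _ mfg); last by move=> z; apply: mule_ge0.
rewrite /fubini_F /=.
under eq_integral => x _ do rewrite ge0_integralZl //.
by rewrite ge0_integralZr //; apply: integral_ge0.
Qed.

Lemma integral_prod_mul_pick {d} {T : measurableType d} (m : probability T R) b
    {f g : T -> \bar R} :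
  measurable_fun setT f -> measurable_fun setT g ->
  (forall x, 0 <= f x) -> (forall x, 0 <= g x) ->
  \int[m \x m]_q (f (pick b q) * g (pick (~~ b) q)) = \int[m]_x f x * \int[m]_x g x.
Proof.
case: b => mf mg f0 g0; rewrite /pick /=; first exact: integral_prod_mul.
under eq_integral do rewrite muleC.
by rewrite [RHS]muleC; exact: integral_prod_mul.
Qed.

Context {d1 d2} {T1 : measurableType d1} {T2 : measurableType d2}.
Implicit Types F G : T1 * T2 -> \bar R.

(* For p = ((x, x'), (y, y')) the four values of cross_mul F G i j p are
   F (x, y) * G (x', y'), F (x, y') * G (x', y), F (x', y) * G (x, y') and
   F (x', y') * G (x, y). *)
Definition cross_mul F G (i j : bool) (p : (T1 * T1) * (T2 * T2)) :=
  F (pick i p.1, pick j p.2) * G (pick (~~ i) p.1, pick (~~ j) p.2).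

Lemma measurable_cross_mul F G i j :
  measurable_fun setT F -> measurable_fun setT G ->
  measurable_fun setT (cross_mul F G i j).
Proof.
move=> mF mG; apply: emeasurable_funM; apply: measurableT_comp => //;
  apply: measurable_fun_pair; apply: measurableT_comp => //; exact: measurable_pick.
Qed.

Lemma integral_cross_mul (m1 : probability T1 R) (m2 : probability T2 R) F G i j :
  measurable_fun setT F -> measurable_fun setT G ->
  (forall z, 0 <= F z) -> (forall z, 0 <= G z) ->
  \int[(m1 \x m1) \x (m2 \x m2)]_p cross_mul F G i j p =
  \int[m1 \x m2]_z F z * \int[m1 \x m2]_z G z.
Proof.
move=> mF mG F0 G0.
have mF1 x : measurable_fun setT (fun y => F (x, y)).
  by apply: measurableT_comp => //; apply: measurable_fun_pair.
have mG1 x : measurable_fun setT (fun y => G (x, y)).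
  by apply: measurableT_comp => //; apply: measurable_fun_pair.
rewrite (@fubini_tonelli1 _ _ _ _ R (m1 \x m1 : probability _ R)
  (m2 \x m2 : probability _ R) _ (measurable_cross_mul _ _ i j mF mG)); last first.
  by move=> p; apply: mule_ge0.
rewrite /fubini_F /cross_mul /=.
under eq_integral => q _ do rewrite (integral_prod_mul_pick _ j (mF1 _) (mG1 _)) //.
rewrite (integral_prod_mul_pick _ i (f := fun x => \int[m2]_y F (x, y))
   (g := fun x => \int[m2]_y G (x, y))).
- by rewrite (fubini_tonelli1 F) // (fubini_tonelli1 G).
- exact: measurable_fun_fubini_tonelli_F.
- exact: measurable_fun_fubini_tonelli_F.
- by move=> x; apply: integral_ge0.
- by move=> x; apply: integral_ge0.
Qed.

Lemma integral_sum_cross_mul (m1 : probability T1 R) (m2 : probability T2 R) F G :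
  measurable_fun setT F -> measurable_fun setT G ->
  (forall z, 0 <= F z) -> (forall z, 0 <= G z) ->
  \int[(m1 \x m1 : probability _ R) \x (m2 \x m2 : probability _ R)]_p
    (\sum_(i : bool) \sum_(j : bool) cross_mul F G i j p) =
  (\int[m1 \x m2]_z F z * \int[m1 \x m2]_z G z) *+ 4.
Proof.
move=> mF mG F0 G0.
have m_cross i j := measurable_cross_mul F G i j mF mG.
have cross_ge0 i j p : 0 <= cross_mul F G i j p by apply: mule_ge0.
rewrite ge0_integral_sum //; last 2 first.
- by move=> i; apply: emeasurable_sum.
- by move=> i p _; apply: sume_ge0.
under eq_bigr do rewrite ge0_integral_sum //.
under eq_bigr do under eq_bigr do rewrite integral_cross_mul //.
by rewrite !big_bool /= !addrA.
Qed.

End product_integrals.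

Lemma ge0_integral_independent {R : realType} {d} {T : measurableType d}
    {P : probability T R} {X Y : {RV P >-> R}} (h : R * R -> \bar R) :
  independent_RV P X Y -> measurable_fun setT h -> (forall z, (0 <= h z)%E) ->
  (\int[P]_w h (X w, Y w) = \int[distribution P X \x distribution P Y]_z h z)%E.
Proof.
move=> XY_indep mh h0.
have mXY : measurable_fun setT (fun w => (X w, Y w)) by apply: measurable_fun_pair.
pose XY : {mfun T >-> (R * R)%type} :=
  HB.pack (fun w => (X w, Y w)) (isMeasurableFun.Build _ _ _ _ _ mXY).
transitivity (\int[distribution P XY]_z h z)%E.
  by rewrite ge0_integral_distribution.
apply: eq_measure_integral => A mA _; apply/esym.
exact: (@product_measure_unique _ _ _ _ R (distribution P X) (distribution P Y)).
Qed.

Section variance.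
Local Open Scope ereal_scope.
Context {R : realType} {d} {T : measurableType d} {P : probability T R}.

Lemma Lfun_normr p (f : T -> R) : f \in Lfun P p -> (fun x => `|f x|)%R \in Lfun P p.
Proof.
rewrite !inE => /andP[/[!inE]/= mf]; rewrite /finite_norm => finf.
apply/andP; split; rewrite inE/=; first exact: measurableT_comp.
rewrite /finite_norm (_ : (EFin \o _) = abse \o (EFin \o f)) ?Lnorm_abse //.
Qed.

Lemma fine_varianceE (Z : T -> R) : Z \in Lfun P 2%:E ->
  fine 'V_P[Z] = (fine 'E_P[(Z ^+ 2)%R] - fine 'E_P[Z] ^+ 2)%R.
Proof.
move=> Z2; have Z1 := Lfun_subset12 (fin_num_measure P _ measurableT) Z2.
rewrite varianceE // -(fineK (expectation_fin_num (Lfun2_mul_Lfun1 Z2 Z2))).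
by rewrite -(fineK (expectation_fin_num Z1)) -EFin_expe -EFinB.
Qed.

Lemma fine_varianceD_le (X Y : T -> R) : X \in Lfun P 2%:E -> Y \in Lfun P 2%:E ->
  (fine 'V_P[X \+ Y] <= 2 * (fine 'V_P[X] + fine 'V_P[Y]))%R.
Proof.
move=> X2 Y2.
have Pfin := fin_num_measure P _ measurableT.
have XY1 := Lfun2_mul_Lfun1 X2 Y2.
have cXY := covariance_fin_num (Lfun_subset12 Pfin X2) (Lfun_subset12 Pfin Y2) XY1.
have := variance_ge0 P (X \- Y)%R; rewrite varianceB // varianceD //.
rewrite -(fineK (variance_fin_num X2)) -(fineK (variance_fin_num Y2)) -(fineK cXY).
by rewrite -!EFinM -EFinN -!EFinD /= lee_fin; lra.
Qed.

Lemma variance_le_sqr_dev (Z : T -> R) x : Z \in Lfun P 2%:E ->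
  'V_P[Z] <= 'E_P[((Z \- cst x) ^+ 2)%R].
Proof.
move=> Z2.
have Zx2 : (Z \- cst x)%R \in Lfun P 2%:E.
  by rewrite rpredB //; [exact: lee1n | move=> ?; exact: Lfun_cst].
have Zx1 := Lfun_subset12 (fin_num_measure P _ measurableT) Zx2.
rewrite -(varianceB_cst_r x Z2) varianceE // leeBlDr ?fin_numX ?expectation_fin_num //.
by apply: leeDl; exact: sqre_ge0.
Qed.

Lemma variance_le_integral_sqr_diff (Z : {RV P >-> R}) : (Z : T -> R) \in Lfun P 2%:E ->
  'V_P[Z] <= \int[distribution P Z \x distribution P Z]_q ((q.1 - q.2) ^+ 2)%:E.
Proof.
move=> Z2.
have mq : measurable_fun setT (fun q : R * R => ((q.1 - q.2) ^+ 2)%:E).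
  by apply/measurable_EFinP; apply: measurable_funX; exact: measurable_funB.
have q0 (q : R * R) : 0 <= ((q.1 - q.2) ^+ 2)%:E by rewrite lee_fin sqr_ge0.
rewrite (fubini_tonelli1 _ mq q0) /fubini_F /=.
have -> : 'V_P[Z] = \int[distribution P Z]_x 'V_P[Z].
  by rewrite integral_cst // [X in _ * X](probability_setT (distribution P Z)) mule1.
apply: ge0_le_integral => //.
- by move=> x _; exact: variance_ge0.
- exact: (measurable_fun_fubini_tonelli_F _ mq q0).
move=> x _; rewrite ge0_integral_distribution //; last 2 first.
- by apply/measurable_EFinP; apply: measurable_funX; exact: measurable_funB.
- by move=> y; rewrite lee_fin sqr_ge0.
rewrite [leRHS](_ : _ = 'E_P[((Z \- cst x) ^+ 2)%R]); first exact: variance_le_sqr_dev.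
by rewrite expectation.unlock; apply: eq_integral => w _ /=; rewrite -sqrrN opprB.
Qed.

End variance.

Section independent_sum.
Local Open Scope ereal_scope.
Context (R : realType) d (T : measurableType d) (P : probability T R)
  (X Y : {RV P >-> R}).
Hypothesis XY_indep : independent_RV P X Y.
Hypotheses (X2 : (X : T -> R) \in Lfun P 2%:E) (Y2 : (Y : T -> R) \in Lfun P 2%:E).

Let mu : probability R R := distribution P X.
Let nu : probability R R := distribution P Y.
Let W : T -> R := fun w => `|X w + Y w|%R.
Let a := fine 'E_P[W].
Let F : R * R -> \bar R := fun z => (normdev2 a (z.1 + z.2)%R)%:E.
Let G : R * R -> \bar R := fun z => (sqr_plus a (z.1 + z.2)%R)%:E.

Let a_ge0 : (0 <= a)%R.
Proof. by apply: fine_ge0; apply: expectation_ge0 => w; rewrite /W. Qed.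

Let mF : measurable_fun setT F.
Proof.
apply/measurable_EFinP; apply: measurable_funX; apply: measurable_funB => //.
by apply: measurableT_comp => //; exact: measurable_funD.
Qed.

Let mG : measurable_fun setT G.
Proof.
apply/measurable_EFinP; apply: measurable_funD => //.
by apply: measurable_funX; exact: measurable_funD.
Qed.

Let F0 z : 0 <= F z. Proof. by rewrite lee_fin normdev2_ge0. Qed.
Let G0 z : 0 <= G z. Proof. by rewrite lee_fin sqr_plus_ge0. Qed.

Lemma integral_normdev2 : \int[mu \x nu]_z F z = 'V_P[W].
Proof.
rewrite -(ge0_integral_independent _ XY_indep mF F0).
rewrite /variance covariance.unlock -/a expectation.unlock.
by apply: eq_integral => w _.
Qed.

Lemma integral_sqr_plus :
  \int[mu \x nu]_z G z = 'E_P[((X \+ Y) ^+ 2)%R] + (a ^+ 2)%:E.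
Proof.
rewrite -(ge0_integral_independent _ XY_indep mG G0) /G /sqr_plus /=.
under eq_integral do rewrite EFinD.
rewrite ge0_integralD //; last 3 first.
- by move=> w _; rewrite lee_fin sqr_ge0.
- by apply/measurable_EFinP; apply: measurable_funX; exact: measurable_funD.
- by move=> w _; rewrite lee_fin sqr_ge0.
rewrite integral_cst // [X in _ * X](_ : _ = 1); last exact: probability_setT.
by rewrite mule1 expectation.unlock.
Qed.

Let Z2 : ((X \+ Y)%R : T -> R) \in Lfun P 2%:E.
Proof. by rewrite rpredD //; exact: lee1n. Qed.

Let W2 : W \in Lfun P 2%:E.
Proof. exact: Lfun_normr Z2. Qed.

Let sqr_sum_fin : 'E_P[((X \+ Y) ^+ 2)%R] \is a fin_num.
Proof. exact: expectation_fin_num (Lfun2_mul_Lfun1 Z2 Z2). Qed.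

Lemma sqr_diff_mul_le_cross_sum (p : (R * R) * (R * R)) :
  ((p.1.1 - p.1.2) ^+ 2)%R%:E * ((p.2.1 - p.2.2) ^+ 2)%R%:E <=
  18%:E * \sum_(i : bool) \sum_(j : bool) cross_mul F G i j p.
Proof.
rewrite !big_bool /cross_mul /F /G /pick /= -!EFinM lee_fin -exprMn.
exact: sqr_mulBB_le _ _ _ _ a_ge0.
Qed.

Lemma variance_mul_le :
  'V_P[X] * 'V_P[Y] <= 72%:E * ('V_P[W] * ('E_P[((X \+ Y) ^+ 2)%R] + (a ^+ 2)%:E)).
Proof.
pose M4 := ((mu \x mu : probability _ R) \x (nu \x nu : probability _ R)).
pose sqr_diff (q : R * R) := ((q.1 - q.2) ^+ 2)%R%:E.
have m_sqr_diff : measurable_fun setT sqr_diff.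
  by apply/measurable_EFinP; apply: measurable_funX; exact: measurable_funB.
have sqr_diff_ge0 q : 0 <= sqr_diff q by rewrite lee_fin sqr_ge0.
have m_cross_sum : measurable_fun setT
    (fun p => \sum_(i : bool) \sum_(j : bool) cross_mul F G i j p).
  by apply: emeasurable_sum => i; apply: emeasurable_sum => j; exact: measurable_cross_mul.
apply: (@le_trans _ _ (\int[M4]_p (sqr_diff p.1 * sqr_diff p.2))).
  rewrite (integral_prod_mul _ _ _ _ m_sqr_diff m_sqr_diff sqr_diff_ge0 sqr_diff_ge0).
  by apply: lee_pmul; rewrite ?variance_ge0 ?variance_le_integral_sqr_diff.
apply: (@le_trans _ _ (\int[M4]_p (18%:E * \sum_(i : bool) \sum_(j : bool) cross_mul F G i j p))).
  apply: ge0_le_integral => //.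
  - by move=> p _; apply: mule_ge0.
  - by apply: emeasurable_funM; apply: measurableT_comp.
  - exact: emeasurable_funM.
  - by move=> p _; exact: sqr_diff_mul_le_cross_sum.
rewrite ge0_integralZl //; last first.
  by move=> p _; apply: sume_ge0 => i _; apply: sume_ge0 => j _; apply: mule_ge0.
rewrite integral_sum_cross_mul // integral_normdev2 integral_sqr_plus.
have c_fin : 'V_P[W] * ('E_P[((X \+ Y) ^+ 2)%R] + (a ^+ 2)%:E) \is a fin_num.
  by rewrite fin_numM ?fin_numD ?sqr_sum_fin ?(variance_fin_num W2).
move: c_fin; set c := 'V_P[W] * _ => c_fin.
by rewrite -(fineK c_fin) -EFin_natmul -!EFinM lee_fin; lra.
Qed.

Local Close Scope ereal_scope.

Lemma variance_normD_ge :
  let E := fine 'E_P[X \+ Y] in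
  let V := fine 'V_P[X \+ Y] in
  0 < V + E ^+ 2 ->
  V * Num.min (fine 'V_P[X]) (fine 'V_P[Y]) / (576 * (V + E ^+ 2))
    <= fine 'V_P[(fun x => `|X x + Y x|)].
Proof.
move=> E V S_gt0; rewrite -/W.
set vx := fine 'V_P[X]; set vy := fine 'V_P[Y]; set Dv := fine 'V_P[W].
set E2 := fine 'E_P[(X \+ Y) ^+ 2].
have vx0 : 0 <= vx by apply: fine_ge0; exact: variance_ge0.
have vy0 : 0 <= vy by apply: fine_ge0; exact: variance_ge0.
have Dv0 : 0 <= Dv by apply: fine_ge0; exact: variance_ge0.
have key : vx * vy <= 72 * (Dv * (E2 + a ^+ 2)).
  have := variance_mul_le.
  rewrite -(fineK (variance_fin_num X2)) -(fineK (variance_fin_num Y2)).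
  by rewrite -(fineK (variance_fin_num W2)) -(fineK sqr_sum_fin) -!EFinD -!EFinM lee_fin.
have S_E2 : V + E ^+ 2 = E2 by rewrite /V /E fine_varianceE // subrK.
have a2_E2 : a ^+ 2 = E2 - Dv.
  rewrite /Dv fine_varianceE // /E2 -/a.
  have -> : W ^+ 2 = (X \+ Y) ^+ 2.
    by apply/funext => w; rewrite !exprfctE /W /= real_normK // num_real.
  ring.
have V_le : V <= 2 * (vx + vy) := fine_varianceD_le _ _ X2 Y2.
have := mul_min_le _ _ _ vx0 vy0 V_le.
rewrite S_E2 in S_gt0 *; rewrite ler_pdivrMr ?mulr_gt0 //.
have := mulr_ge0 Dv0 Dv0; nra.
Qed.

End independent_sum.

Theorem lemma4 (R : realType) :
  exists K1 : R, 0 < K1 /\ K1 <= 20480 /\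
  forall (d : measure_display) (T : measurableType d) (P : probability T R)
         (X Y : {RV P >-> R}),
    independent_RV P X Y ->
    (X : T -> R) \in Lfun P 2%:E -> (Y : T -> R) \in Lfun P 2%:E ->
    let E := fine 'E_P[X \+ Y] in
    let V := fine 'V_P[X \+ Y] in
    0 < V + E ^+ 2 ->
    V * Num.min (fine 'V_P[X]) (fine 'V_P[Y]) / (K1 * (V + E ^+ 2))
      <= fine 'V_P[(fun x => `|X x + Y x|)].
Proof.
exists 576; split; first lra; split; first lra.
by move=> d T P X Y; exact: variance_normD_ge.
Qed.
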